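(* Let $(V,\nu)$ be a strongly complete PN-space, $(W,\mu)$ a PN-space, and $(T_n)_{n\in\mathbb{N}}$ a sequence in $B(V,W)$ such that $\sup_{n\in\mathbb{N}}\|T_nx\|_{w'}<\infty$ for every $x\in V$ and every $w'\in(0,1)$. Then for every $w'\in(0,1)$ there exists $w\in(0,1)$ such that $\sup_{n\in\mathbb{N}}\|T_n\|_{(w,w')}<\infty$.
   Context: A distance distribution function is a map $F:[-\infty,+\infty]\to[0,1]$ that is nondecreasing, left-continuous on $\mathbb{R}$, with $F(-\infty)=0$, $F(+\infty)=1$ and $F(0)=0$; the set of these is $\Delta^+$. $\mathcal{D}^+\subseteq\Delta^+$ denotes the proper ones, i.e. those with $\lim_{x\to+\infty}F(x)=1$. $H_0\in\Delta^+$ is $H_0(x)=0$ for $x\le 0$ and $H_0(x)=1$ for $x>0$. For $F,G\in\Delta^+$ let $\tau_M(F,G)(x)=\sup\{\min(F(s),G(t)) : s+t=x\}$. In this paper a PN-space $(V,\nu)$ is a real vector space $V$ with a map $\nu:V\to\Delta^+$, $p\mapsto\nu_p$, such that for all $p,q\in V$: $\nu_p=H_0$ iff $p=0$; $\nu_{p+q}\ge\tau_M(\nu_p,\nu_q)$ pointwise; and $\nu_{\alpha p}(x)=\nu_p(x/|\alpha|)$ for all real $\alpha\neq0$ and $x\ge 0$. Standing assumption: $\nu_p\in\mathcal{D}^+$ for every $p\in V$. For $x\in V$ and $w\in(0,1)$ put $\|x\|_w=\sup\{t\in\mathbb{R}:\nu_x(t)<w\}$ (in $W$ analogously using $\mu$);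 for each $w$ this is a norm, and $w\mapsto\|x\|_w$ is nondecreasing. The strong topology on $V$ is generated by the neighbourhoods $N_p(t)=\{q\in V:\nu_{p-q}(t)>1-t\}$, $p\in V$, $t>0$; equivalently the balls $\{x:\|x-p\|_w<r\}$ form a basis for it. A sequence $(p_n)$ converges strongly to $p$ if for every $t>0$ one has $p_n\in N_p(t)$ for all large $n$; it is strongly Cauchy if for every $t>0$ there is $N$ with $\nu_{p_n-p_m}(t)>1-t$ for all $m,n>N$. $(V,\nu)$ is strongly complete if every strongly Cauchy sequence converges strongly. $B(V,W)$ denotes the set of linear operators $V\to W$ that are continuous for the strong topologies. For a linear $T:V\to W$ and $w,w'\in(0,1)$, $\|T\|_{(w,w')}=\sup\{\|Tx\|_{w'}: x\in V,\ \|x\|_w\le 1\}\in[0,+\infty]$. *)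

From Stdlib Require Import Reals Lra Classical ClassicalEpsilon.
Open Scope R_scope.

Record RVectorSpace := {
  vcar :> Type;
  vzero : vcar;
  vadd : vcar -> vcar -> vcar;
  vopp : vcar -> vcar;
  vscal : R -> vcar -> vcar;
  vadd_assoc : forall x y z, vadd x (vadd y z) = vadd (vadd x y) z;
  vadd_comm : forall x y, vadd x y = vadd y x;
  vadd_zero : forall x, vadd x vzero = x;
  vadd_opp : forall x, vadd x (vopp x) = vzero;
  vscal_one : forall x, vscal 1 x = x;
  vscal_assoc : forall a b x, vscal a (vscal b x) = vscal (a * b) x;
  vscal_distr_v : forall a x y, vscal a (vadd x y) = vadd (vscal a x) (vscal a y);
  vscal_distr_s : forall a b x, vscal (a + b) x = vadd (vscal a x) (vscal b x)
}.

Arguments vzero {_}.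
Arguments vadd {_} _ _.
Arguments vopp {_} _.
Arguments vscal {_} _ _.

Definition vsub {V : RVectorSpace} (x y : V) : V := vadd x (vopp y).

(** The values at -oo (=0) and +oo (=1) are fixed by convention and carry
    no information, so F is represented by its restriction R -> R. *)
Definition is_ddf (F : R -> R) : Prop :=
  (forall x, 0 <= F x <= 1) /\
  (forall x y, x <= y -> F x <= F y) /\
  (forall x eps, 0 < eps -> exists d, 0 < d /\
       forall y, x - d < y < x -> Rabs (F x - F y) < eps) /\
  F 0 = 0.

Definition is_proper_ddf (F : R -> R) : Prop :=
  is_ddf F /\
  (forall eps, 0 < eps -> exists M, forall x, M <= x -> Rabs (F x - 1) < eps).

Definition H0 (x : R) : R := if Rle_dec x 0 then 0 else 1.

Definition tauM_set (F G : R -> R) (x : R) : R -> Prop :=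
  fun v => exists s t, s + t = x /\ v = Rmin (F s) (G t).

Definition tauM_is (F G : R -> R) (x y : R) : Prop := is_lub (tauM_set F G x) y.

(** PN-spaces (with the standing assumption nu_p proper). *)
Record is_PN_space (V : RVectorSpace) (nu : V -> R -> R) : Prop := {
  pn_ddf : forall p, is_proper_ddf (nu p);
  pn_H0 : forall p, (forall x, nu p x = H0 x) <-> p = vzero;
  pn_tri : forall p q x y, tauM_is (nu p) (nu q) x y -> y <= nu (vadd p q) x;
  pn_scal : forall p a x, a <> 0 -> 0 <= x -> nu (vscal a p) x = nu p (x / Rabs a)
}.

Definition Rsup_of (E : R -> Prop) : R := epsilon (inhabits 0) (fun l => is_lub E l).

Definition pnorm {V : RVectorSpace} (nu : V -> R -> R) (w : R) (x : V) : R :=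
  Rsup_of (fun t => nu x t < w).

Definition Nbhd {V : RVectorSpace} (nu : V -> R -> R) (p : V) (t : R) : V -> Prop :=
  fun q => nu (vsub p q) t > 1 - t.

Definition strong_open {V : RVectorSpace} (nu : V -> R -> R) (U : V -> Prop) : Prop :=
  forall p, U p -> exists t, 0 < t /\ forall q, Nbhd nu p t q -> U q.

Definition strong_continuous {V W : RVectorSpace} (nu : V -> R -> R) (mu : W -> R -> R)
  (T : V -> W) : Prop :=
  forall U, strong_open mu U -> strong_open nu (fun x => U (T x)).

Definition is_linear {V W : RVectorSpace} (T : V -> W) : Prop :=
  (forall x y, T (vadd x y) = vadd (T x) (T y)) /\
  (forall a x, T (vscal a x) = vscal a (T x)).

Definition in_B {V W : RVectorSpace} (nu : V -> R -> R) (mu : W -> R -> R)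
  (T : V -> W) : Prop := is_linear T /\ strong_continuous nu mu T.

Definition strong_converges {V : RVectorSpace} (nu : V -> R -> R) (p : nat -> V) (l : V)
  : Prop :=
  forall t, 0 < t -> exists N, forall n, (N <= n)%nat -> Nbhd nu l t (p n).

Definition strong_cauchy {V : RVectorSpace} (nu : V -> R -> R) (p : nat -> V) : Prop :=
  forall t, 0 < t -> exists N, forall m n, (N < m)%nat -> (N < n)%nat ->
    nu (vsub (p n) (p m)) t > 1 - t.

Definition strongly_complete {V : RVectorSpace} (nu : V -> R -> R) : Prop :=
  forall p, strong_cauchy nu p -> exists l, strong_converges nu p l.

(* In a strongly complete PN-space the Baire category theorem holds: the open sets
   G_k = { x | k < ||T_n x||_w' for some n } cannot all be dense, since by pointwise
   boundedness their intersection is empty. So some strong ball N_p(t) lies outside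
   G_k, i.e. ||T_n q||_w' <= k for all n and all q in N_p(t). If t <= 1, ||x||_w <= 1 and
   w = 1 - t/2, then p - (t/2) x lies in that ball, and linearity and the triangle
   inequality for ||.||_w' give ||T_n x||_w' <= (2/t) 2k. *)

From Stdlib Require Import Reals ZArith Lra Lia Classical ClassicalEpsilon FunctionalExtensionality.
Open Scope R_scope.

Section VectorSpaceAlgebra.
Variable V : RVectorSpace.
Implicit Types x y z p q r : V.

Lemma vadd0l x : vadd vzero x = x.
Proof. rewrite vadd_comm; apply vadd_zero. Qed.

Lemma vaddI x y z : vadd x y = vadd x z -> y = z.
Proof.
  intro E.
  assert (E' : vadd (vopp x) (vadd x y) = vadd (vopp x) (vadd x z)) by now rewrite E.
  rewrite !vadd_assoc, (vadd_comm _ (vopp x) x), vadd_opp, !vadd0l in E'.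
  exact E'.
Qed.

Lemma vscal0 x : vscal 0 x = vzero.
Proof.
  apply (vaddI (vscal 0 x)). rewrite vadd_zero, <- vscal_distr_s. f_equal; ring.
Qed.

Lemma vopp_vscalN1 x : vopp x = vscal (-1) x.
Proof.
  apply (vaddI x). rewrite vadd_opp.
  rewrite <- (vscal_one V x) at 1. rewrite <- vscal_distr_s.
  replace (1 + -1) with 0 by ring. now rewrite vscal0.
Qed.

Lemma vsubvv p : vsub p p = vzero.
Proof. apply vadd_opp. Qed.

Lemma vsub_split p q r : vsub p r = vadd (vsub p q) (vsub q r).
Proof.
  unfold vsub. rewrite <- vadd_assoc. f_equal.
  now rewrite vadd_assoc, (vadd_comm _ (vopp q) q), vadd_opp, vadd0l.
Qed.

Lemma vopp_vsub p q : vopp (vsub p q) = vsub q p.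
Proof. apply (vaddI (vsub p q)). now rewrite vadd_opp, <- vsub_split, vsubvv. Qed.

Lemma vsubKr p y : vsub p (vsub p y) = y.
Proof.
  unfold vsub at 1. rewrite vopp_vsub. unfold vsub.
  now rewrite vadd_comm, <- vadd_assoc, (vadd_comm _ (vopp p) p), vadd_opp, vadd_zero.
Qed.

Lemma vadd_vsubKr y z : vadd z (vsub y z) = y.
Proof.
  unfold vsub.
  now rewrite vadd_assoc, (vadd_comm _ z y), <- vadd_assoc, vadd_opp, vadd_zero.
Qed.

End VectorSpaceAlgebra.

Lemma linear_vsub (V W : RVectorSpace) (T : V -> W) (x y : V) :
  is_linear T -> T (vsub x y) = vsub (T x) (T y).
Proof.
  intros [Hadd Hscal]. unfold vsub.
  now rewrite Hadd, !vopp_vscalN1, Hscal.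
Qed.

Section PNSpace.
Variables (U : RVectorSpace) (mu : U -> R -> R).
Hypothesis HU : is_PN_space U mu.

Lemma pn_range z x : 0 <= mu z x <= 1.
Proof. apply (pn_ddf _ _ HU z). Qed.

Lemma pn_mono z x y : x <= y -> mu z x <= mu z y.
Proof. apply (pn_ddf _ _ HU z). Qed.

Lemma pn_at0 z : mu z 0 = 0.
Proof. apply (pn_ddf _ _ HU z). Qed.

Lemma pn_nonpos z x : x <= 0 -> mu z x = 0.
Proof.
  intro Hx. pose proof (pn_mono z _ _ Hx). pose proof (pn_range z x).
  rewrite pn_at0 in *. lra.
Qed.

Lemma pn_vzero x : mu vzero x = H0 x.
Proof. now apply (pn_H0 _ _ HU vzero). Qed.

Lemma pn_opp z x : mu (vopp z) x = mu z x.
Proof.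
  destruct (Rle_dec x 0) as [Hx|Hx].
  - now rewrite !pn_nonpos.
  - rewrite vopp_vscalN1, (pn_scal _ _ HU) by lra.
    rewrite Rabs_left by lra. f_equal. field.
Qed.

Lemma pn_add p q s t : Rmin (mu p s) (mu q t) <= mu (vadd p q) (s + t).
Proof.
  destruct (completeness (tauM_set (mu p) (mu q) (s + t))) as [y Hy].
  - exists 1. intros v [s' [t' [_ ->]]].
    pose proof (pn_range p s'). pose proof (Rmin_l (mu p s') (mu q t')). lra.
  - exists (Rmin (mu p s) (mu q t)), s, t. now split.
  - apply Rle_trans with y; [apply Hy; now exists s, t|].
    exact (pn_tri _ _ HU p q (s + t) y Hy).
Qed.

Section Pnorm.
Variable w : R.
Hypothesis Hw : 0 < w < 1.

Lemma pnorm_lub z : is_lub (fun t => mu z t < w) (pnorm mu w z).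
Proof.
  unfold pnorm, Rsup_of. apply epsilon_spec.
  destruct (completeness (fun t => mu z t < w)) as [l Hl]; [| |now exists l].
  - destruct (proj2 (pn_ddf _ _ HU z) (1 - w)) as [M HM]; [lra|].
    exists M. intros t Ht. apply Rnot_lt_le. intro HMt.
    specialize (HM t (Rlt_le _ _ HMt)). apply Rabs_def2 in HM. lra.
  - exists 0. rewrite pn_at0. lra.
Qed.

Lemma pnorm_ge0 z : 0 <= pnorm mu w z.
Proof. apply (pnorm_lub z). rewrite pn_at0. lra. Qed.

Lemma pnorm_le z r : (forall s, r < s -> w <= mu z s) -> pnorm mu w z <= r.
Proof.
  intro Hs. apply (pnorm_lub z). intros t Ht.
  apply Rnot_lt_le. intro Hrt. specialize (Hs t Hrt). lra.
Qed.

Lemma pn_ge_of_pnorm_le z r s : pnorm mu w z <= r -> r < s -> w <= mu z s.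
Proof.
  intros Hz Hrs. apply Rnot_lt_le. intro Hs.
  assert (s <= pnorm mu w z) by now apply (pnorm_lub z). lra.
Qed.

Lemma pnorm_gtP z k : k < pnorm mu w z -> exists s, k < s /\ mu z s < w.
Proof.
  intro Hk. apply NNPP. intro Hn.
  enough (pnorm mu w z <= k) by lra.
  apply pnorm_le. intros s Hs. apply Rnot_lt_le. intro Hl. apply Hn. now exists s.
Qed.

Lemma pnorm_add u v : pnorm mu w (vadd u v) <= pnorm mu w u + pnorm mu w v.
Proof.
  apply pnorm_le. intros s Hs.
  set (e := s - pnorm mu w u - pnorm mu w v).
  assert (Hu : w <= mu u (pnorm mu w u + e / 2))
    by (apply (pn_ge_of_pnorm_le u (pnorm mu w u)); unfold e; lra).
  assert (Hv : w <= mu v (pnorm mu w v + e / 2))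
    by (apply (pn_ge_of_pnorm_le v (pnorm mu w v)); unfold e; lra).
  pose proof (pn_add u v (pnorm mu w u + e / 2) (pnorm mu w v + e / 2)) as Huv.
  replace (pnorm mu w u + e / 2 + (pnorm mu w v + e / 2)) with s in Huv by (unfold e; lra).
  pose proof (Rmin_glb _ _ _ Hu Hv). lra.
Qed.

Lemma pnorm_opp u : pnorm mu w (vopp u) = pnorm mu w u.
Proof. unfold pnorm. f_equal. apply functional_extensionality. intro t. now rewrite pn_opp. Qed.

Lemma pnorm_scal_le u a : a <> 0 -> pnorm mu w (vscal a u) <= Rabs a * pnorm mu w u.
Proof.
  intro Ha. apply pnorm_le. intros s Hs.
  pose proof (pnorm_ge0 u). pose proof (Rabs_pos_lt a Ha).
  rewrite (pn_scal _ _ HU) by nra.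
  apply (pn_ge_of_pnorm_le u (pnorm mu w u)); [lra|].
  apply Rmult_lt_reg_r with (Rabs a); [lra|].
  replace (s / Rabs a * Rabs a) with s by (field; lra). lra.
Qed.

Lemma strong_open_pnorm_gt k : strong_open mu (fun y => k < pnorm mu w y).
Proof.
  intros y Hy. destruct (pnorm_gtP y k Hy) as [s [Hks Hs]].
  pose proof (Rmin_l ((s - k) / 2) (1 - w)). pose proof (Rmin_r ((s - k) / 2) (1 - w)).
  set (t := Rmin ((s - k) / 2) (1 - w)) in *.
  exists t. split; [apply Rmin_glb_lt; lra|].
  intros z Hz. unfold Nbhd in Hz. apply Rnot_le_lt. intro Hzk.
  assert (Hz1 : w <= mu z ((k + s) / 2)) by (apply (pn_ge_of_pnorm_le z k); lra).
  pose proof (pn_add z (vsub y z) ((k + s) / 2) t) as Hyz.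
  rewrite vadd_vsubKr in Hyz.
  assert (Hz2 : w <= mu (vsub y z) t) by lra.
  pose proof (Rmin_glb _ _ _ Hz1 Hz2).
  pose proof (pn_mono y ((k + s) / 2 + t) s ltac:(lra)). lra.
Qed.

End Pnorm.

Lemma Nbhd_pos p q t : Nbhd mu p t q -> 0 < t.
Proof. unfold Nbhd. pose proof (pn_range (vsub p q) t). lra. Qed.

Lemma Nbhd_refl p t : 0 < t -> Nbhd mu p t p.
Proof.
  intro Ht. unfold Nbhd. rewrite vsubvv, pn_vzero. unfold H0.
  destruct (Rle_dec t 0); lra.
Qed.

Lemma Nbhd_widen p q s s' : s <= s' -> Nbhd mu p s q -> Nbhd mu p s' q.
Proof. unfold Nbhd. pose proof (pn_mono (vsub p q) s s'). lra. Qed.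

Lemma Nbhd_sym p q t : Nbhd mu p t q -> Nbhd mu q t p.
Proof. unfold Nbhd. now rewrite <- vopp_vsub, pn_opp. Qed.

Lemma Nbhd_trans p q r s t : Nbhd mu p s q -> Nbhd mu q t r -> Nbhd mu p (s + t) r.
Proof.
  intros Hpq Hqr. pose proof (Nbhd_pos _ _ _ Hpq). pose proof (Nbhd_pos _ _ _ Hqr).
  unfold Nbhd in *. rewrite (vsub_split _ p q r).
  pose proof (pn_add (vsub p q) (vsub q r) s t).
  assert (1 - (s + t) < Rmin (mu (vsub p q) s) (mu (vsub q r) t))
    by (apply Rmin_glb_lt; lra).
  lra.
Qed.

End PNSpace.

Lemma INR_unbounded (r : R) : exists N : nat, r < INR N.
Proof.
  destruct (archimed r) as [Hup _].
  destruct (Z_le_gt_dec 0 (up r)) as [Hz|Hz].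
  - exists (Z.to_nat (up r)). now rewrite INR_IZR_INZ, Z2Nat.id.
  - exists 0%nat. apply Z.gt_lt, IZR_lt in Hz. simpl. lra.
Qed.

Lemma dependent_choice_seq (A : Type) (a0 : A) (P : nat -> A -> A -> Prop) :
  (forall k a, exists b, P k a b) ->
  exists s : nat -> A, s 0%nat = a0 /\ forall k, P k (s k) (s (S k)).
Proof.
  intro Hex. set (step k a := epsilon (inhabits a0) (P k a)).
  exists (nat_rect (fun _ => A) a0 step). split; [reflexivity|].
  intro k. simpl. apply epsilon_spec, Hex.
Qed.

Lemma strong_open_exists (V : RVectorSpace) (nu : V -> R -> R) (I : Type)
  (G : I -> V -> Prop) :
  (forall i, strong_open nu (G i)) -> strong_open nu (fun q => exists i, G i q).
Proof.
  intros Hopen p [i Hp]. destruct (Hopen i p Hp) as [t [Ht HtG]].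
  exists t. split; [exact Ht|]. intros q Hq. exists i. exact (HtG q Hq).
Qed.

Section Baire.
Variables (V : RVectorSpace) (nu : V -> R -> R).
Hypothesis HV : is_PN_space V nu.

Definition strongly_dense (G : V -> Prop) : Prop :=
  forall p t, 0 < t -> exists q, Nbhd nu p t q /\ G q.

Lemma Nbhd_halving_chain (x : nat -> V) (t : nat -> R) :
  (forall k, 0 < t k) -> (forall k, t (S k) <= t k / 2) ->
  (forall k, Nbhd nu (x k) (t k) (x (S k))) ->
  forall k m, (k < m)%nat -> Nbhd nu (x k) (2 * t k) (x m).
Proof.
  intros Hpos Hhalf Hstep k m Hkm.
  assert (Hchain : Nbhd nu (x k) (2 * t k - 2 * t m) (x m)).
  { induction Hkm as [|m Hkm IH].
    - apply (Nbhd_widen _ _ HV _ _ (t k)); [specialize (Hhalf k); lra|apply Hstep].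
    - eapply (Nbhd_widen _ _ HV); [|exact (Nbhd_trans _ _ HV _ _ _ _ _ IH (Hstep m))].
      specialize (Hhalf m). lra. }
  eapply (Nbhd_widen _ _ HV); [|exact Hchain]. specialize (Hpos m). lra.
Qed.

Lemma strong_cauchy_halving_chain (x : nat -> V) (t : nat -> R) :
  (forall k, 0 < t k) -> (forall k, t (S k) <= t k / 2) ->
  (forall k, t k <= / INR (S k)) ->
  (forall k, Nbhd nu (x k) (t k) (x (S k))) ->
  strong_cauchy nu x.
Proof.
  intros Hpos Hhalf Hsmall Hstep e He.
  destruct (archimed_cor1 (e / 4)) as [N [HN HN0]]; [lra|].
  exists N. intros m n Hm Hn.
  pose proof (Nbhd_halving_chain x t Hpos Hhalf Hstep) as Hchain.
  change (Nbhd nu (x n) e (x m)).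
  eapply (Nbhd_widen _ _ HV);
    [|exact (Nbhd_trans _ _ HV _ _ _ _ _
               (Nbhd_sym _ _ HV _ _ _ (Hchain N n Hn)) (Hchain N m Hm))].
  assert (/ INR (S N) <= / INR N).
  { apply Rinv_le_contravar; [apply lt_0_INR; lia|apply le_INR; lia]. }
  specialize (Hsmall N). lra.
Qed.

(* Radius [3 s] leaves room for the tail of the nested sequence started at [q]:
   its later terms stay within [2 s] of [q], and its limit within [s] of them. *)
Lemma dense_open_shrink (G : V -> Prop) :
  strong_open nu G -> strongly_dense G ->
  forall p t r, 0 < t -> 0 < r ->
  exists q s, 0 < s /\ s <= t / 2 /\ s <= r /\ Nbhd nu p t q /\
    forall z, Nbhd nu q (3 * s) z -> G z.
Proof.
  intros Hopen Hdense p t r Ht Hr.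
  destruct (Hdense p t Ht) as [q [Hpq Hq]].
  destruct (Hopen q Hq) as [s [Hs HsG]].
  pose proof (Rmin_l (s / 3) (Rmin (t / 2) r)).
  pose proof (Rmin_r (s / 3) (Rmin (t / 2) r)).
  pose proof (Rmin_l (t / 2) r). pose proof (Rmin_r (t / 2) r).
  exists q, (Rmin (s / 3) (Rmin (t / 2) r)).
  split; [repeat apply Rmin_glb_lt; lra|].
  do 2 (split; [lra|]). split; [exact Hpq|].
  intros z Hz. apply HsG. eapply (Nbhd_widen _ _ HV); [|exact Hz]. lra.
Qed.

Hypothesis Hcomplete : strongly_complete nu.

Theorem strongly_complete_baire (G : nat -> V -> Prop) :
  (forall k, strong_open nu (G k)) -> (forall k, strongly_dense (G k)) ->
  exists l, forall k, G k l.
Proof.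
  intros Hopen Hdense.
  set (P k (a b : V * R) := 0 < snd a ->
    0 < snd b /\ snd b <= snd a / 2 /\ snd b <= / INR (S (S k)) /\
    Nbhd nu (fst a) (snd a) (fst b) /\
    forall z, Nbhd nu (fst b) (3 * snd b) z -> G k z).
  destruct (dependent_choice_seq _ (vzero, 1) P) as [seq [Hseq0 Hseq]].
  { intros k [p t]. destruct (Rlt_dec 0 t) as [Ht|Ht].
    - assert (Hr : 0 < / INR (S (S k))) by (apply Rinv_0_lt_compat, lt_0_INR; lia).
      destruct (dense_open_shrink _ (Hopen k) (Hdense k) p t _ Ht Hr)
        as [q [s Hqs]].
      now exists (q, s).
    - exists (p, t). intro. simpl in *. lra. }
  set (x k := fst (seq k)). set (t k := snd (seq k)).
  assert (Hpos : forall k, 0 < t k).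
  { induction k as [|k IH]; [unfold t; rewrite Hseq0; simpl; lra|apply (Hseq k IH)]. }
  assert (Hnext : forall k, 0 < t (S k) /\ t (S k) <= t k / 2 /\
      t (S k) <= / INR (S (S k)) /\ Nbhd nu (x k) (t k) (x (S k)) /\
      forall z, Nbhd nu (x (S k)) (3 * t (S k)) z -> G k z)
    by (intro k; exact (Hseq k (Hpos k))).
  assert (Hhalf : forall k, t (S k) <= t k / 2) by apply Hnext.
  assert (Hstep : forall k, Nbhd nu (x k) (t k) (x (S k))) by apply Hnext.
  assert (Hsmall : forall k, t k <= / INR (S k)).
  { intros [|k]; [unfold t; rewrite Hseq0; simpl; lra|apply Hnext]. }
  destruct (Hcomplete x (strong_cauchy_halving_chain x t Hpos Hhalf Hsmall Hstep))
    as [l Hl].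
  exists l. intro k.
  destruct (Hl (t (S k)) (Hpos (S k))) as [N HN].
  set (m := (S (S k) + N)%nat).
  apply (Hnext k). eapply (Nbhd_widen _ _ HV);
    [|exact (Nbhd_trans _ _ HV _ _ _ _ _
               (Nbhd_halving_chain x t Hpos Hhalf Hstep (S k) m ltac:(lia))
               (Nbhd_sym _ _ HV _ _ _ (HN m ltac:(lia))))].
  lra.
Qed.

End Baire.

Lemma pointwise_bounded_uniform_on_ball (V W : RVectorSpace) (nu : V -> R -> R)
  (mu : W -> R -> R) (T : nat -> V -> W) (w' : R) :
  is_PN_space V nu -> is_PN_space W mu -> strongly_complete nu ->
  (forall n, in_B nu mu (T n)) -> 0 < w' < 1 ->
  (forall x, exists M, forall n, pnorm mu w' (T n x) <= M) ->
  exists K p t, 0 < t /\ forall q, Nbhd nu p t q -> forall n, pnorm mu w' (T n q) <= K.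
Proof.
  intros HV HW Hcomplete HB Hw' Hpt. apply NNPP. intro Hno.
  set (G (k : nat) q := exists n, INR k < pnorm mu w' (T n q)).
  assert (Hopen : forall k, strong_open nu (G k)).
  { intro k. apply strong_open_exists. intro n.
    exact (proj2 (HB n) _ (strong_open_pnorm_gt _ _ HW _ Hw' (INR k))). }
  assert (Hdense : forall k, strongly_dense V nu (G k)).
  { intros k p t Ht. apply NNPP. intro Hnd. apply Hno.
    exists (INR k), p, t. split; [exact Ht|]. intros q Hq n.
    apply Rnot_lt_le. intro Hlt. apply Hnd. exists q. split; [exact Hq|now exists n]. }
  destruct (strongly_complete_baire V nu HV Hcomplete G Hopen Hdense) as [l Hl].
  destruct (Hpt l) as [M HM]. destruct (INR_unbounded M) as [k Hk].
  destruct (Hl k) as [n Hn]. specialize (HM n). lra.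
Qed.

Lemma Nbhd_vsub_vscal (V : RVectorSpace) (nu : V -> R -> R) (p x : V) (t : R) :
  is_PN_space V nu -> 0 < t <= 1 -> pnorm nu (1 - t / 2) x <= 1 ->
  Nbhd nu p t (vsub p (vscal (t / 2) x)).
Proof.
  intros HV Ht Hx. unfold Nbhd. rewrite vsubKr, (pn_scal _ _ HV) by lra.
  rewrite Rabs_pos_eq by lra. replace (t / (t / 2)) with 2 by (field; lra).
  pose proof (pn_ge_of_pnorm_le _ _ HV (1 - t / 2) ltac:(lra) x 1 2 Hx ltac:(lra)).
  lra.
Qed.

(* Every [x] in the [w]-unit ball is a multiple [2/t] of a difference of two points
   of the ball [N_p(t)]. *)
Lemma pnorm_bound_of_ball_bound (V W : RVectorSpace) (nu : V -> R -> R)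
  (mu : W -> R -> R) (T : V -> W) (w' K : R) (p : V) (t : R) :
  is_PN_space V nu -> is_PN_space W mu -> is_linear T -> 0 < w' < 1 -> 0 < t <= 1 ->
  (forall q, Nbhd nu p t q -> pnorm mu w' (T q) <= K) ->
  forall x, pnorm nu (1 - t / 2) x <= 1 -> pnorm mu w' (T x) <= 4 * K / t.
Proof.
  intros HV HW HT Hw' Ht Hball x Hx.
  set (y := vscal (t / 2) x).
  assert (Hy : pnorm mu w' (T y) <= 2 * K).
  { replace (T y) with (vadd (T p) (vopp (T (vsub p y))))
      by now fold (vsub (T p) (T (vsub p y))); rewrite <- linear_vsub, vsubKr.
    pose proof (pnorm_add _ _ HW _ Hw' (T p) (vopp (T (vsub p y)))).
    rewrite pnorm_opp in * by assumption.
    pose proof (Hball p (Nbhd_refl _ _ HV p t ltac:(lra))).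
    pose proof (Hball (vsub p y) (Nbhd_vsub_vscal V nu p x t HV Ht Hx)).
    lra. }
  assert (Hxy : x = vscal (2 / t) y).
  { unfold y. rewrite vscal_assoc. replace (2 / t * (t / 2)) with 1 by (field; lra).
    now rewrite vscal_one. }
  rewrite Hxy, (proj2 HT).
  eapply Rle_trans; [apply (pnorm_scal_le _ _ HW _ Hw'); apply Rgt_not_eq, Rdiv_lt_0_compat; lra|].
  rewrite Rabs_pos_eq by (apply Rlt_le, Rdiv_lt_0_compat; lra).
  replace (4 * K / t) with (2 / t * (2 * K)) by (field; lra).
  apply Rmult_le_compat_l; [apply Rlt_le, Rdiv_lt_0_compat; lra|exact Hy].
Qed.

Theorem theorem4p11 (V W : RVectorSpace) (nu : V -> R -> R) (mu : W -> R -> R)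
  (T : nat -> V -> W) :
  is_PN_space V nu -> is_PN_space W mu -> strongly_complete nu ->
  (forall n, in_B nu mu (T n)) ->
  (forall (x : V) (w' : R), 0 < w' < 1 ->
     exists M, forall n, pnorm mu w' (T n x) <= M) ->
  forall w', 0 < w' < 1 ->
    exists w, 0 < w < 1 /\
      exists M, forall n (x : V), pnorm nu w x <= 1 -> pnorm mu w' (T n x) <= M.
Proof.
  intros HV HW Hcomplete HB Hpt w' Hw'.
  destruct (pointwise_bounded_uniform_on_ball V W nu mu T w' HV HW Hcomplete HB Hw'
              (fun x => Hpt x w' Hw')) as [K [p [t [Ht Hball]]]].
  pose proof (Rmin_l t 1). pose proof (Rmin_r t 1).
  assert (Ht1 : 0 < Rmin t 1 <= 1) by (split; [apply Rmin_glb_lt|]; lra).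
  exists (1 - Rmin t 1 / 2). split; [lra|].
  exists (4 * K / Rmin t 1). intros n.
  apply (pnorm_bound_of_ball_bound V W nu mu (T n) w' K p); try assumption.
  - apply HB.
  - intros q Hq. apply Hball. eapply (Nbhd_widen _ _ HV); [|exact Hq]. assumption.
Qed.
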